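(* Fix $m\in\mathbb{Z}^+$. Let $f,g\colon X\to \mathbb{Z}$ be functions on a finite set $X$. For $k\in\mathbb{Z}$ and $l\in\mathbb{Z}_{2m}$, let $W_k(l)=\{x\in X\colon kf(x)\equiv l \pmod{2m}\}$. If $$\sum_{x\in W_k(l)}g(x)=\sum_{x\in W_k(l+m)}g(x)\qquad\text{for every } l\in\mathbb{Z}_m$$ holds for $k=1$, then it holds for every odd integer $k$.
   Context: $\mathbb{Z}_m$ denotes the residues $\{0,1,\dots,m-1\}$. *)

From mathcomp Require Import all_boot all_order all_algebra.
Set Implicit Arguments. Unset Strict Implicit. Unset Printing Implicit Defensive.
Import GRing.Theory Num.Theory.
Local Open Scope ring_scope.

Definition W (X : finType) (m : nat) (f : X -> int) (k l : int) : {set X} :=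
  [set x | ((k * f x)%R == l %[mod (2 * m)%N%:Z])%Z].

Definition balanced (X : finType) (m : nat) (f g : X -> int) (k : int) : Prop :=
  forall l : 'I_m,
    \sum_(x in W m f k (l%:Z)) g x = \sum_(x in W m f k ((l + m)%N%:Z)) g x.

From mathcomp Require Import all_boot all_order all_algebra.
From mathcomp Require Import zify ring.
Set Implicit Arguments. Unset Strict Implicit. Unset Printing Implicit Defensive.
Local Open Scope ring_scope.
Import GRing.Theory Num.Theory.

(* Group the sums by the residue r of f modulo 2m and write T(r) for the sum
   of g over the fibre f = r (mod 2m).  The case k = 1 says exactly that T is
   invariant under r |-> r + m.  For odd k we have k m = m (mod 2m), so
   r |-> r + m maps {r | k r = l} onto {r | k r = l + m} and carries T to
   itself; hence both sides of the balance condition are the same sum. *)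

Section ResidueSums.
Variables (d : nat) (d_gt0 : (0 < d)%N).

Let modz_ge0_nat (z : int) : 0 <= (z %% d)%Z.
Proof. by rewrite modz_ge0 // eqz_nat -lt0n. Qed.

Lemma modz_lt_nat (z : int) : (`|(z %% d)%Z| < d)%N.
Proof. by rewrite -ltz_nat gez0_abs // ltz_pmod // ltz_nat. Qed.

Definition residue (z : int) : 'I_d := Ordinal (modz_lt_nat z).

Lemma residueE (z : int) : (residue z)%:Z = (z %% d)%Z.
Proof. by rewrite /= gez0_abs. Qed.

Lemma eq_residue (z : int) (r : 'I_d) : (residue z == r) = (z == r %[mod d])%Z.
Proof. by rewrite -(inj_eq val_inj) -eqz_nat residueE modz_nat modn_small. Qed.

Lemma sum_by_residue (I : finType) (R : nmodType) (f : I -> int) (g : I -> R)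
    (P : pred int) :
  (forall z, P (z %% d)%Z = P z) ->
  \sum_(i | P (f i)) g i = \sum_(r < d | P r) \sum_(i | (f i == r %[mod d])%Z) g i.
Proof.
move=> P_mod; rewrite (partition_big (residue \o f) (fun r : 'I_d => P r)).
  apply: eq_bigr => r Pr; apply: eq_bigl => i /=.
  rewrite eq_residue andbC; case: eqP => //= f_eq_r.
  by rewrite -P_mod f_eq_r P_mod.
by move=> i; rewrite /= residueE P_mod.
Qed.

Definition shift_ord (s : nat) (r : 'I_d) : 'I_d := Ordinal (ltn_pmod (r + s) d_gt0).

Lemma shift_ord_inj (s : nat) : injective (shift_ord s).
Proof.
move=> a b /(congr1 val)/eqP /=; rewrite eqn_modDr => /eqP.
by rewrite !modn_small // => /val_inj.
Qed.

Lemma sum_ord_shift (R : nmodType) (s : nat) (P : pred int) (F : int -> R) :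
  (forall z, P (z %% d)%Z = P z) -> (forall z, F (z %% d)%Z = F z) ->
  \sum_(r < d | P r) F r = \sum_(r < d | P (r%:Z + s%:Z)) F (r%:Z + s%:Z).
Proof.
move=> P_mod F_mod; rewrite (reindex_inj (@shift_ord_inj s)).
by apply: eq_big => [r|r _]; rewrite /= -modz_nat PoszD ?P_mod ?F_mod.
Qed.

End ResidueSums.

Lemma odd_mulz_mod_double (k : int) (m : nat) :
  ~~ (2%:Z %| k)%Z -> (k * m%:Z == m%:Z %[mod (2 * m)%N%:Z])%Z.
Proof.
move=> k_odd; rewrite eqz_mod_dvd.
have -> : k = (k %/ 2)%Z * 2 + 1 by lia.
have -> : ((k %/ 2)%Z * 2 + 1) * m%:Z - m%:Z = (2 * m)%N%:Z * (k %/ 2)%Z.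
  by rewrite PoszM; ring.
exact: dvdz_mulr.
Qed.

Section Balance.
Variables (X : finType) (m : nat) (f g : X -> int).
Hypothesis m_gt0 : (0 < m)%N.
Local Notation N := (2 * m)%N.
Let N_gt0 : (0 < N)%N. Proof. by rewrite muln_gt0. Qed.

Definition fiber_sum (r : int) : int := \sum_(x | (f x == r %[mod N])%Z) g x.

Lemma fiber_sum_mod (r : int) : fiber_sum (r %% N)%Z = fiber_sum r.
Proof. by apply: eq_bigl => x; rewrite modz_mod. Qed.

Lemma fiber_sum_addN (r : int) : fiber_sum (r + N%:Z) = fiber_sum r.
Proof. by rewrite -fiber_sum_mod modzDr fiber_sum_mod. Qed.

Lemma sum_W (k l : int) :
  \sum_(x in W m f k l) g x = \sum_(r < N | (k * r == l %[mod N])%Z) fiber_sum r.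
Proof.
rewrite -(sum_by_residue N_gt0 f g (P := fun z => k * z == l %[mod N])%Z).
  by apply: eq_bigl => x; rewrite inE.
by move=> z; rewrite /= modzMmr.
Qed.

Lemma sum_W1 (l : nat) : (l < N)%N -> \sum_(x in W m f 1 l) g x = fiber_sum l.
Proof.
move=> l_lt_N; rewrite sum_W (big_pred1 (Ordinal l_lt_N)) // => j /=.
by rewrite mul1r !modz_nat !modn_small // eqz_nat -(inj_eq val_inj).
Qed.

Lemma balanced1_fiber_sum_shift :
  balanced m f g 1 -> forall r, fiber_sum (r + m%:Z) = fiber_sum r.
Proof.
move=> bal1 r.
have [n n_lt_N r_mod] : exists2 n : nat, (n < N)%N & (r %% N)%Z = n.
  by exists (residue N_gt0 r); rewrite ?residueE.
rewrite -fiber_sum_mod -modzDml r_mod fiber_sum_mod -[RHS]fiber_sum_mod r_mod.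
case: (ltnP n m) => [n_lt_m | n_ge_m].
  have n_m_lt_N : (n + m < N)%N by lia.
  by have := bal1 (Ordinal n_lt_m); rewrite /= !sum_W1 // PoszD => ->.
have [j_lt_m j_lt_N] : (n - m < m)%N /\ (n - m < N)%N by lia.
have := bal1 (Ordinal j_lt_m); rewrite /= !sum_W1 ?subnK //.
have -> : n%:Z + m%:Z = (n - m)%N%:Z + N%:Z by rewrite -!PoszD; congr Posz; lia.
by rewrite fiber_sum_addN => ->.
Qed.

Lemma balanced_odd (k : int) :
  (forall r, fiber_sum (r + m%:Z) = fiber_sum r) ->
  ~~ (2%:Z %| k)%Z -> balanced m f g k.
Proof.
move=> fiber_shift k_odd l; rewrite !sum_W.
rewrite (sum_ord_shift N_gt0 m (F := fiber_sum)
  (P := fun z => k * z == (l + m)%N %[mod N])%Z); last first.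
- exact: fiber_sum_mod.
- by move=> z; rewrite /= modzMmr.
apply: eq_big => [r|r _]; last by rewrite fiber_shift.
have km := odd_mulz_mod_double m k_odd.
by rewrite PoszD mulrDr -(modzDmr (k * r)) (eqP km) modzDmr eqz_modDr.
Qed.

End Balance.

Theorem lemma4p6 (m : nat) (X : finType) (f g : X -> int) :
  (0 < m)%N ->
  balanced m f g 1 ->
  forall k : int, ~~ (2%:Z %| k)%Z -> balanced m f g k.
Proof.
move=> m_gt0 bal1 k k_odd.
exact: balanced_odd (balanced1_fiber_sum_shift m_gt0 bal1) k_odd.
Qed.
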